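(* Any data structure for $n$-vertex directed graphs that decides, for any query set $F$ of at most $2f$ failing edges with $2f = O(\log n)$, whether the fault-tolerant diameter $\mathrm{diam}(G-F)$ is finite requires $\Omega(2^f n)$ bits of space.
   Context: $G-F$ is $G$ with the edges of $F$ removed and $\mathrm{diam}(H)=\max_{s,t} d_H(s,t)$, the maximum shortest-path distance over ordered vertex pairs; it is finite iff $H$ is strongly connected. *)

From mathcomp Require Import all_boot.
Set Implicit Arguments. Unset Strict Implicit. Unset Printing Implicit Defensive.

Definition loopless n (E : {set 'I_n * 'I_n}) : Prop :=
  forall v : 'I_n, (v, v) \notin E.

Definition remove_edges n (E F : {set 'I_n * 'I_n}) : {set 'I_n * 'I_n} :=
  E :\: F.

Definition adj n (E : {set 'I_n * 'I_n}) : rel 'I_n :=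
  fun u v => (u, v) \in E.

Definition dist_le n (E : {set 'I_n * 'I_n}) (s t : 'I_n) (k : nat) : Prop :=
  exists p : seq 'I_n, [/\ path (adj E) s p, last s p = t & size p <= k].

Definition diam_le n (E : {set 'I_n * 'I_n}) (D : nat) : Prop :=
  forall s t : 'I_n, dist_le E s t D.

Definition diam_finite n (E : {set 'I_n * 'I_n}) : Prop :=
  exists D : nat, diam_le E D.

From mathcomp Require Import all_boot zify.
Set Implicit Arguments. Unset Strict Implicit. Unset Printing Implicit Defensive.

(* Write f = g + 1.  A bit array b indexed by (k, x, y), k < K, x < 2^f and
   y < 2^g, is stored in a digraph G_b: block k holds a tree T1 whose leaves x
   have arcs to the leaves y of a tree T2 as prescribed by b.  For i = (k, x, y)
   the failure set F_i consists of the arcs leaving the root-to-leaf path of x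
   in T1 (f arcs), the arcs entering the leaf-to-root path of y in T2 (g arcs),
   and the hub arc into the root of T2.  In G_b - F_i the only arc that can
   enter the set of T1 nodes off the first path and T2 nodes on the second
   from outside is the arc from leaf x to leaf y.  If b i = 0 that set, which
   contains the root of T2, is unreachable from the hub; if b i = 1 the hub
   reaches the root of T2 along both paths, and from there everything.  The
   oracle thus recovers b from its s bits, so s >= K 2^(2g+1), and blocks of
   2^(g+3) vertices leave room for enough of them to make this 2^f n / 16. *)

Lemma diam_finiteP n (E : {set 'I_n * 'I_n}) :
  diam_finite E <-> (forall s t : 'I_n, connect (adj E) s t).
Proof.
split=> [[D dE] s t | conn].
  by have [p [pp lp _]] := dE s t; apply/connectP; exists p.
exists n => s t; have /connectP[p pp ->] := conn s t.
have [p' pp' /card_uniqP size_p' _] := shortenP pp.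
exists p'; split=> //.
by have := max_card (mem (s :: p')); rewrite size_p' card_ord => /ltnW.
Qed.

Lemma connect_pred_closed (T : finType) (e : rel T) (S : pred T) x y :
  (forall u v, e u v -> S v -> S u) -> connect e x y -> S y -> S x.
Proof.
move=> closedS /connectP[p + ->]; elim: p x => [|z p IHp] x //= /andP[exz pz] Sy.
exact: closedS exz (IHp z pz Sy).
Qed.

Lemma connect_chain_down (T : finType) (e : rel T) (x : nat -> T) D :
  (forall a, a < D -> e (x a.+1) (x a)) -> connect e (x D) (x 0).
Proof.
elim: D => [|D IHD] step; first exact: connect0.
apply: connect_trans (connect1 (step D _)) (IHD _) => // a ltaD.
exact: step (ltnW ltaD).
Qed.

Lemma connect_chain_up (T : finType) (e : rel T) (x : nat -> T) D :
  (forall a, a < D -> e (x a) (x a.+1)) -> connect e (x 0) (x D).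
Proof.
elim: D => [|D IHD] step; first exact: connect0.
apply: connect_trans (IHD _) (connect1 (step D _)) => // a ltaD.
exact: step (ltnW ltaD).
Qed.

Lemma decodable_card_le (X : finType) s (code : {ffun X -> bool} -> s.-tuple bool)
    (decode : X -> s.-tuple bool -> bool) :
  (forall b i, decode i (code b) = b i) -> #|X| <= s.
Proof.
move=> codeK; have code_inj : injective code.
  by move=> b b' eq_code; apply/ffunP => i; rewrite -!codeK eq_code.
by have := leq_card _ code_inj; rewrite card_ffun card_tuple !card_bool leq_exp2l.
Qed.

(* Heap indexing: the root is 1 and the children of m are 2m and 2m+1, so the
   ancestors of l are the l %/ 2 ^ a and the leaves of depth D are [2^D, 2^D.+1). *)
Definition heap_anc D l m := [exists a : 'I_D.+1, l %/ 2 ^ a == m].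

Definition heap_sibling x := x %/ 2 * 2 + (1 - x %% 2).

Lemma heap_ancP D l m : reflect (exists2 a, a <= D & l %/ 2 ^ a = m) (heap_anc D l m).
Proof.
apply: (iffP existsP) => [[a /eqP <-]|[a leaD <-]]; first by exists a; rewrite // -ltnS.
by exists (Ordinal (leaD : a < D.+1)).
Qed.

Lemma divn_exp2S l a : l %/ 2 ^ a.+1 = l %/ 2 ^ a %/ 2.
Proof. by rewrite expnSr divnMA. Qed.

Section HeapLeaf.

Variables D l : nat.
Hypothesis leaf_l : 2 ^ D <= l < 2 ^ D.+1.

Lemma heap_anc_range a : a <= D -> 0 < l %/ 2 ^ a < 2 ^ D.+1.
Proof.
case/andP: leaf_l => ge_l lt_l leaD; rewrite divn_gt0 ?expn_gt0 //.
by rewrite (leq_trans (leq_pexp2l _ leaD)) ?(leq_ltn_trans (leq_div _ _)).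
Qed.

Lemma heap_root : l %/ 2 ^ D = 1.
Proof.
case/andP: leaf_l => ge_l lt_l; apply/eqP; rewrite eqn_leq.
by rewrite -ltnS ltn_divLR ?leq_divRL ?expn_gt0 // mul1n -expnS lt_l.
Qed.

Lemma heap_anc_root : heap_anc D l 1.
Proof. by apply/heap_ancP; exists D; rewrite ?heap_root. Qed.

Lemma heap_anc_leaf m : heap_anc D l m -> 2 ^ D <= m -> m = l.
Proof.
case/heap_ancP=> [[|a] leaD <-]; first by rewrite divn1.
have : l %/ 2 ^ a.+1 <= l %/ 2 by rewrite divn_exp2S leq_div2r ?leq_div.
case/andP: leaf_l => _; rewrite expnS; move: (l %/ 2 ^ a.+1) => x; lia.
Qed.

Lemma heap_path_exit p q : heap_anc D l p -> ~~ heap_anc D l q -> q %/ 2 = p -> p < 2 ^ D ->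
  exists i : 'I_D, p = l %/ 2 ^ i.+1 /\ q = heap_sibling (l %/ 2 ^ i).
Proof.
case/heap_ancP=> [[|i] leiD def_p] q_off q_child lt_p.
  by move: leaf_l lt_p; rewrite -def_p divn1; lia.
exists (Ordinal (leiD : i < D)); split=> //=.
have : q != l %/ 2 ^ i.
  by apply: contraNneq q_off => ->; apply/heap_ancP; exists i; rewrite 1?ltnW.
by move: def_p; rewrite divn_exp2S /heap_sibling; move: (l %/ 2 ^ i) => x; lia.
Qed.

End HeapLeaf.

Section Gadget.

Variables (n' K g : nat).

Local Notation V := 'I_n'.+1.
Local Notation Q := (2 ^ g).
Local Notation P := (4 * 2 ^ g).
Local Notation M := (8 * 2 ^ g).

(* Vertex 0 is a hub and vertex 1 + k * M + j is slot j of block k < K; the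
   remaining vertices are padding.  Every vertex has an arc to the hub, and the
   hub has an arc to every vertex except the non-root tree nodes.  In each block, slots [1, P) hold a complete binary tree T1 of depth g + 1 with
   arcs towards the leaves, and slots P + x, x in [1, 2Q), a tree T2 of depth g
   with arcs towards its root P + 1; leaf 2Q + x of T1 has an arc to leaf
   P + Q + y of T2 iff bit (k, x, y) is set, and the root of T2 has an arc to
   every other tree node of its block. *)
Definition block (v : V) := v.-1 %/ M.
Definition slot (v : V) := v.-1 %% M.
Definition in_block (v : V) := (0 < v) && (block v < K).
Definition node k j : V := inord (1 + k * M + j).
Definition hub : V := ord0.

Definition tree1 j := 0 < j < P.
Definition leaf1 j := 2 * Q <= j < P.
Definition tree2 j := P < j < P + 2 * Q.
Definition leaf2 j := P + Q <= j < P + 2 * Q.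
Definition root2 := P.+1.
Definition hub_target j := [|| ~~ (tree1 j || tree2 j), j == 1 | j == root2].

Definition Idx := ('I_K * 'I_(2 * Q) * 'I_Q)%type.
Definition idx_nat (i : Idx) := (i.1.1 : nat, i.1.2 : nat, i.2 : nat).
Definition bit_at (b : {ffun Idx -> bool}) k x y :=
  [exists i, b i && (idx_nat i == (k, x, y))].

Definition block_arc b k j j' :=
  [|| [&& tree1 j, tree1 j' & j' %/ 2 == j],
      [&& tree2 j, tree2 j' & (j - P) %/ 2 == j' - P],
      [&& leaf1 j, leaf2 j' & bit_at b k (j - 2 * Q) (j' - P - Q)]
    | [&& j == root2, tree1 j' || tree2 j' & j' != root2]].

Definition arc b (u v : V) :=
  [|| (u != hub) && (v == hub),
      [&& u == hub, v != hub & ~~ in_block v || hub_target (slot v)]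
    | [&& in_block u, in_block v, block u == block v &
          block_arc b (block u) (slot u) (slot v)]].

Definition graph b := [set e : V * V | arc b e.1 e.2].

Lemma idx_nat_inj : injective idx_nat.
Proof.
by move=> [[k x] y] [[k' x'] y'] [/val_inj-> /val_inj-> /val_inj->].
Qed.

Lemma bit_atE b (i : Idx) : bit_at b i.1.1 i.1.2 i.2 = b i.
Proof.
apply/existsP/idP => [[i' /andP[bi' /eqP/idx_nat_inj <-]] // | bi].
by exists i; rewrite bi /=.
Qed.

Lemma M_gt0 : 0 < M. Proof. by rewrite muln_gt0 expn_gt0. Qed.

Lemma slot_lt v : slot v < M. Proof. by rewrite ltn_mod M_gt0. Qed.

Lemma tree1_tree2 j : tree1 j -> tree2 j = false.
Proof. by rewrite /tree1 /tree2; lia. Qed.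

Lemma tree2_tree1 j : tree2 j -> tree1 j = false.
Proof. by rewrite /tree1 /tree2; lia. Qed.

Lemma tree_lt j : tree1 j || tree2 j -> j < M.
Proof. by rewrite /tree1 /tree2; lia. Qed.

Lemma tree2_root2 : tree2 root2.
Proof. by rewrite /tree2 /root2; have := expn_gt0 2 g; lia. Qed.

Lemma tree1_1 : tree1 1.
Proof. by rewrite /tree1; have := expn_gt0 2 g; move: (2 ^ g) => q; lia. Qed.

Lemma leaf1_tree1 j : leaf1 j -> tree1 j.
Proof. by rewrite /tree1 /leaf1; have := expn_gt0 2 g; move: (2 ^ g) => q; lia. Qed.

Lemma leaf2_tree2 j : leaf2 j -> tree2 j.
Proof. by rewrite /tree2 /leaf2; have := expn_gt0 2 g; move: (2 ^ g) => q; lia. Qed.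

Lemma leaf1_ge j : leaf1 j -> 2 ^ g.+1 <= j.
Proof. by rewrite /leaf1 expnS; lia. Qed.

Lemma leaf2_ge j : leaf2 j -> 2 ^ g <= j - P.
Proof. by rewrite /leaf2; lia. Qed.

Lemma root2_lt : root2 < M.
Proof. by apply: tree_lt; rewrite tree2_root2 orbT. Qed.

Lemma tree1_heap x : 0 < x < 2 ^ g.+2 -> tree1 x.
Proof. by rewrite /tree1 !expnS mulnA. Qed.

Lemma tree2_heap x : 0 < x < 2 ^ g.+1 -> tree2 (P + x).
Proof. by rewrite /tree2 expnS; lia. Qed.

Lemma block_arc_irrefl b k j : ~~ block_arc b k j j.
Proof.
by apply/negP; case/or4P=> /and3P[]; rewrite /tree1 /tree2 /leaf1 /leaf2; lia.
Qed.

Lemma loopless_graph b : loopless (graph b).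
Proof.
move=> v; rewrite inE /arc /=.
by case: eqP => _; rewrite ?andbF /= (negbTE (block_arc_irrefl _ _ _)) !andbF.
Qed.

Hypothesis blocks_fit : K * M <= n'.

Section Node.

Variables k j : nat.
Hypotheses (lt_k : k < K) (lt_j : j < M).

Lemma node_val : node k j = 1 + k * M + j :> nat.
Proof.
rewrite inordK //; have : k.+1 * M <= K * M by rewrite leq_mul2r lt_k orbT.
by rewrite mulSn; move: (k * M) => t; lia.
Qed.

Lemma block_node : block (node k j) = k.
Proof. by rewrite /block node_val add1n /= divnMDl ?M_gt0 // divn_small ?addn0. Qed.

Lemma slot_node : slot (node k j) = j.
Proof. by rewrite /slot node_val add1n /= modnMDl modn_small. Qed.

Lemma in_block_node : in_block (node k j).
Proof. by rewrite /in_block block_node node_val lt_k. Qed.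

End Node.

Lemma node_eta v : in_block v -> v = node (block v) (slot v).
Proof.
case/andP=> v_gt0 lt_block; apply: val_inj => /=; rewrite node_val ?slot_lt //.
by rewrite /block /slot -addnA -divn_eq add1n prednK.
Qed.

Lemma in_block_neq_hub v : in_block v -> v != hub.
Proof. by case/andP; rewrite -val_eqE /= lt0n. Qed.

Section Faults.

Variable i : Idx.

Definition ki := (i.1.1 : nat).
Definition l1 := 2 * Q + i.1.2.
Definition l2 := Q + i.2.
Definition on_path1 j := heap_anc g.+1 l1 j.
Definition on_path2 j := heap_anc g l2 (j - P).
Definition r2 := node ki root2.

Definition cut1 j j' := [&& tree1 j, tree1 j', j' %/ 2 == j, on_path1 j & ~~ on_path1 j'].
Definition cut2 j j' :=
  [&& tree2 j, tree2 j', (j - P) %/ 2 == j' - P, ~~ on_path2 j & on_path2 j'].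
Definition block_cut (c : rel nat) := [set e : V * V | [&& in_block e.1, in_block e.2,
  block e.1 == ki, block e.2 == ki & c (slot e.1) (slot e.2)]].
Definition faults := (hub, r2) |: (block_cut cut1 :|: block_cut cut2).

Lemma ki_lt : ki < K. Proof. exact: ltn_ord. Qed.

Lemma l1_leaf : 2 ^ g.+1 <= l1 < 2 ^ g.+2.
Proof. by have := ltn_ord i.1.2; rewrite /l1 !expnS; lia. Qed.

Lemma l2_leaf : 2 ^ g <= l2 < 2 ^ g.+1.
Proof. by have := ltn_ord i.2; rewrite /l2 expnS; lia. Qed.

Lemma card_block_cut (c : rel nat) m (h : 'I_m -> nat * nat) :
  (forall j j', c j j' -> exists t, (j, j') = h t) -> #|block_cut c| <= m.
Proof.
move=> cover; rewrite -[m in _ <= m]card_ord.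
apply: leq_trans (leq_imset_card (fun t => (node ki (h t).1, node ki (h t).2)) _).
apply/subset_leq_card/subsetP => -[u v]; rewrite inE /=.
case/and5P=> bu bv /eqP ku /eqP kv /cover[t eq_t]; apply/imsetP; exists t => //.
by rewrite (node_eta bu) (node_eta bv) ku kv -eq_t.
Qed.

Lemma card_cut1 : #|block_cut cut1| <= g.+1.
Proof.
apply: (card_block_cut (h := fun t => (l1 %/ 2 ^ t.+1, heap_sibling (l1 %/ 2 ^ t)))).
move=> j j' /and5P[_ lt_j' /eqP j'_child on_j off_j'].
have [|t [-> ->]] := heap_path_exit l1_leaf on_j off_j' j'_child; last by exists t.
by move: lt_j' j'_child; rewrite /tree1 !expnS; move: (2 ^ g) => q; lia.
Qed.

Lemma card_cut2 : #|block_cut cut2| <= g.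
Proof.
apply: (card_block_cut (h := fun t => (P + heap_sibling (l2 %/ 2 ^ t), P + l2 %/ 2 ^ t.+1))).
move=> j j' /and5P[lt_j lt_j' /eqP j_child off_j on_j'].
have [|t [def_j' def_j]] := heap_path_exit l2_leaf on_j' off_j j_child.
  by move: lt_j j_child; rewrite /tree2; move: (2 ^ g) => q; lia.
move: lt_j lt_j' => /andP[/ltnW le_j _] /andP[/ltnW le_j' _].
by exists t; rewrite -def_j -def_j' !subnKC.
Qed.

Lemma card_faults : #|faults| <= 2 * g.+1.
Proof.
rewrite cardsU1 (leq_trans (leq_add (leq_b1 _) (leq_card_setU _ _))) //.
by have := card_cut1; have := card_cut2; lia.
Qed.

Lemma in_block_r2 : in_block r2.
Proof. exact: in_block_node ki_lt root2_lt. Qed.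

Lemma hub_target_r2 : hub_target (slot r2).
Proof. by rewrite slot_node ?ki_lt ?root2_lt // /hub_target eqxx !orbT. Qed.

Lemma node_neq_r2 k j : k < K -> j < M -> (k != ki) || (j != root2) -> node k j != r2.
Proof.
move=> lt_k lt_j; apply: contraTneq => eq_r2.
move: (congr1 block eq_r2) (congr1 slot eq_r2).
by rewrite /r2 !block_node ?slot_node ?ki_lt ?root2_lt // => -> ->; rewrite !eqxx.
Qed.

Lemma faults_sub_graph (b : {ffun Idx -> bool}) : faults \subset graph b.
Proof.
apply/subsetP => -[u v]; rewrite !inE /arc /= => /or3P[/eqP[-> ->] | | ].
- by rewrite eqxx in_block_neq_hub ?in_block_r2 // hub_target_r2 orbT.
- case/and5P=> -> -> /eqP-> /eqP-> /and5P[t1 t1' child _ _].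
  by rewrite eqxx /block_arc t1 t1' child !orbT.
- case/and5P=> -> -> /eqP-> /eqP-> /and5P[t2 t2' child _ _].
  by rewrite eqxx /block_arc t2 t2' child !orbT.
Qed.

Definition hidden_slot j := (tree1 j && ~~ on_path1 j) || (tree2 j && on_path2 j).
Definition hidden (v : V) := [&& in_block v, block v == ki & hidden_slot (slot v)].

Lemma on_path1_root : on_path1 1.
Proof. exact: heap_anc_root l1_leaf. Qed.

Lemma on_path2_root2 : on_path2 root2.
Proof. by rewrite /on_path2 /root2 subSnn; exact: heap_anc_root l2_leaf. Qed.

Lemma hidden_slot_root2 : hidden_slot root2.
Proof. by rewrite /hidden_slot tree2_root2 on_path2_root2 orbT. Qed.

Lemma hub_target_hidden j : hub_target j -> hidden_slot j -> j = root2.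
Proof.
rewrite /hidden_slot; case/or3P=> [| /eqP-> | /eqP-> //].
  by rewrite negb_or => /andP[/negbTE-> /negbTE->].
by rewrite on_path1_root andbF (tree1_tree2 tree1_1).
Qed.

Lemma hidden_slot_pred (b : {ffun Idx -> bool}) j j' : ~~ b i -> block_arc b ki j j' ->
  ~~ cut1 j j' -> ~~ cut2 j j' -> hidden_slot j' -> hidden_slot j.
Proof.
move=> bi0; case/or4P=> [| | | /and3P[/eqP-> _ _] _ _ _]; last exact: hidden_slot_root2.
- case/and3P=> t1 t1' child; rewrite /cut1 /hidden_slot t1 t1' child.
  by rewrite (tree1_tree2 t1) (tree1_tree2 t1'); case: (on_path1 j) (on_path1 j') => [] [].
- case/and3P=> t2 t2' child; rewrite /cut2 /hidden_slot t2 t2' child.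
  by rewrite (tree2_tree1 t2) (tree2_tree1 t2'); case: (on_path2 j) (on_path2 j') => [] [].
case/and3P=> l1j l2j' bit; have t1 := leaf1_tree1 l1j; have t2' := leaf2_tree2 l2j'.
rewrite /hidden_slot t1 t2' (tree1_tree2 t1) (tree2_tree1 t2') /= orbF => _ _ on_j'.
apply: contraNN bi0 => on_j; move: bit.
rewrite (heap_anc_leaf l1_leaf on_j (leaf1_ge l1j)).
rewrite (heap_anc_leaf l2_leaf on_j' (leaf2_ge l2j')).
by rewrite /l1 /l2 !addKn bit_atE.
Qed.

Lemma hidden_pred (b : {ffun Idx -> bool}) : ~~ b i ->
  forall u v, adj (graph b :\: faults) u v -> hidden v -> hidden u.
Proof.
move=> bi0 u v; rewrite /adj !inE /arc /= !negb_or => /andP[/and3P[not_r2 not_cut1 not_cut2]].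
case/or3P=> [/andP[_ /eqP->] // | /and3P[/eqP u_hub _ target] | ].
  case/and3P=> bv /eqP kv hv; rewrite bv /= in target.
  move: not_r2; rewrite u_hub /r2 -kv -(hub_target_hidden target hv) -node_eta //.
  by rewrite eqxx.
case/and4P=> bu bv /eqP kuv arc_uv /and3P[_ /eqP kv hv].
rewrite /hidden bu kuv kv eqxx /=; rewrite bu bv kuv kv eqxx /= in not_cut1 not_cut2.
by apply: hidden_slot_pred bi0 _ not_cut1 not_cut2 hv; rewrite -kv -kuv.
Qed.

Lemma hidden_r2 : hidden r2.
Proof.
rewrite /hidden in_block_r2 /r2 block_node ?slot_node ?ki_lt ?root2_lt //.
by rewrite eqxx hidden_slot_root2.
Qed.

Lemma faults_disconnect (b : {ffun Idx -> bool}) :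
  ~~ b i -> ~ diam_finite (graph b :\: faults).
Proof.
move=> bi0 /diam_finiteP/(_ hub r2) hub_r2.
by have := connect_pred_closed (hidden_pred bi0) hub_r2 hidden_r2.
Qed.

Section Reach.

Variable b : {ffun Idx -> bool}.
Hypothesis bi1 : b i.
Local Notation G := (adj (graph b :\: faults)).

Lemma node_step k j j' : k < K -> j < M -> j' < M -> block_arc b k j j' ->
  (k == ki) ==> ~~ cut1 j j' && ~~ cut2 j j' -> G (node k j) (node k j').
Proof.
move=> lt_k lt_j lt_j' arc_jj' uncut; rewrite /adj !inE /arc /= !negb_or.
rewrite !in_block_node ?block_node ?slot_node // eqxx arc_jj' !orbT andbT /=.
rewrite xpair_eqE (negbTE (in_block_neq_hub (in_block_node lt_k lt_j))) /=.
by case: eqP uncut => // ->.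
Qed.

Lemma hub_step v : v != hub -> ~~ in_block v || hub_target (slot v) -> v != r2 -> G hub v.
Proof.
move=> v_hub target v_r2; rewrite /adj !inE /arc /=.
by rewrite v_hub target xpair_eqE eqxx (negbTE v_r2).
Qed.

Lemma to_hub v : v != hub -> G v hub.
Proof.
move=> v_hub; rewrite /adj !inE /arc /= !andbF !orbF.
by rewrite xpair_eqE (negbTE v_hub).
Qed.

Lemma path1_step a : a <= g -> G (node ki (l1 %/ 2 ^ a.+1)) (node ki (l1 %/ 2 ^ a)).
Proof.
move=> le_a_g; have t1 := tree1_heap (heap_anc_range l1_leaf (leqW le_a_g)).
have t1' := tree1_heap (heap_anc_range l1_leaf (le_a_g : a < g.+1)).
apply: node_step; rewrite ?ki_lt ?tree_lt ?t1 ?t1' //.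
  by rewrite /block_arc t1 t1' divn_exp2S eqxx.
have on_path : on_path1 (l1 %/ 2 ^ a) by apply/heap_ancP; exists a; rewrite 1?leqW.
by rewrite /cut1 /cut2 on_path (tree1_tree2 t1) !andbF implybT.
Qed.

Lemma bit_step : G (node ki l1) (node ki (P + l2)).
Proof.
have l1_leaf1 : leaf1 l1 by rewrite /leaf1 /l1; have := ltn_ord i.1.2; lia.
have l2_leaf2 : leaf2 (P + l2) by rewrite /leaf2 /l2; have := ltn_ord i.2; lia.
have t1 := leaf1_tree1 l1_leaf1; have t2 := leaf2_tree2 l2_leaf2.
apply: node_step; rewrite ?ki_lt ?tree_lt ?t1 ?t2 ?orbT //.
  rewrite /block_arc l1_leaf1 l2_leaf2.
  have -> : l1 - 2 * Q = i.1.2 by rewrite addKn.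
  have -> : P + l2 - P - Q = i.2 by rewrite !addKn.
  by rewrite bit_atE bi1 !orbT.
by rewrite /cut1 /cut2 (tree2_tree1 t2) (tree1_tree2 t1) !andbF implybT.
Qed.

Lemma path2_step a : a < g -> G (node ki (P + l2 %/ 2 ^ a)) (node ki (P + l2 %/ 2 ^ a.+1)).
Proof.
move=> lt_a_g; have t2 := tree2_heap (heap_anc_range l2_leaf (ltnW lt_a_g)).
have t2' := tree2_heap (heap_anc_range l2_leaf lt_a_g).
apply: node_step; rewrite ?ki_lt ?tree_lt ?t2 ?t2' ?orbT //.
  by rewrite /block_arc t2 t2' !addKn divn_exp2S eqxx !orbT.
have on_path : on_path2 (P + l2 %/ 2 ^ a).
  by apply/heap_ancP; exists a; rewrite ?addKn 1?ltnW.
by rewrite /cut1 /cut2 on_path (tree2_tree1 t2) !andbF implybT.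
Qed.

Lemma root2_step k j : k < K -> tree1 j || tree2 j -> j != root2 ->
  G (node k root2) (node k j).
Proof.
move=> lt_k tj j_root2; apply: node_step; rewrite ?root2_lt ?tree_lt //.
  by rewrite /block_arc eqxx tj j_root2 !orbT.
by rewrite /cut1 /cut2 (tree2_tree1 tree2_root2) on_path2_root2 !andbF implybT.
Qed.

Lemma hub_reaches_r2 : connect G hub r2.
Proof.
have lt1 : 1 < M by rewrite tree_lt ?tree1_1.
have to_r1 : G hub (node ki 1).
  apply: hub_step; rewrite ?in_block_neq_hub ?in_block_node ?node_neq_r2 ?ki_lt //.
    by rewrite slot_node ?ki_lt // /hub_target eqxx orbT.
  by rewrite /root2 eqSS eq_sym muln_eq0 expn_eq0 orbT.
have down : connect G (node ki (l1 %/ 2 ^ g.+1)) (node ki (l1 %/ 2 ^ 0)).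
  exact: (@connect_chain_down _ G (fun a => node ki (l1 %/ 2 ^ a)) g.+1 path1_step).
have up : connect G (node ki (P + l2 %/ 2 ^ 0)) (node ki (P + l2 %/ 2 ^ g)).
  exact: (@connect_chain_up _ G (fun a => node ki (P + l2 %/ 2 ^ a)) g path2_step).
rewrite expn0 divn1 heap_root ?l1_leaf // in down.
rewrite expn0 divn1 heap_root ?l2_leaf // addn1 in up.
apply: connect_trans (connect1 to_r1) (connect_trans down _).
exact: connect_trans (connect1 bit_step) up.
Qed.

Lemma hub_reaches v : connect G hub v.
Proof.
have [-> | v_hub] := eqVneq v hub; first exact: connect0.
have [bv | nbv] := boolP (in_block v); last first.
  apply/connect1/hub_step; rewrite ?nbv //.
  by apply: contraNneq nbv => ->; exact: in_block_r2.
have lt_k : block v < K by case/andP: bv.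
have reach_root2 : connect G hub (node (block v) root2).
  have [-> | k_ki] := eqVneq (block v) ki; first exact: hub_reaches_r2.
  apply/connect1/hub_step; rewrite ?in_block_neq_hub ?in_block_node ?root2_lt //.
    by rewrite slot_node ?root2_lt // /hub_target eqxx !orbT.
  by rewrite node_neq_r2 ?root2_lt ?k_ki.
rewrite (node_eta bv); have [-> // | j_root2] := eqVneq (slot v) root2.
have [tj | ntj] := boolP (tree1 (slot v) || tree2 (slot v)).
  exact: connect_trans reach_root2 (connect1 (root2_step lt_k tj j_root2)).
apply/connect1/hub_step; rewrite -?node_eta ?in_block_neq_hub //.
  by rewrite /hub_target ntj orbT.
by rewrite (node_eta bv); apply: node_neq_r2; rewrite ?slot_lt ?j_root2 ?orbT.
Qed.

Lemma faults_connect : diam_finite (graph b :\: faults).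
Proof.
apply/diam_finiteP => s t; apply: connect_trans (hub_reaches t).
by have [-> | s_hub] := eqVneq s hub; [exact: connect0 | exact/connect1/to_hub].
Qed.

End Reach.

Lemma diam_finite_faults b : diam_finite (graph b :\: faults) <-> b i.
Proof. by split=> [|/faults_connect //]; apply: contraPT => /faults_disconnect. Qed.

End Faults.

End Gadget.

Lemma blocks_size_bound n' q : 16 * q <= n'.+1 ->
  2 * q * n'.+1 <= 16 * (n' %/ (8 * q) * (2 * q) * q).
Proof.
move=> large; have [-> | q_gt0] := posnP q; first by rewrite !muln0.
have := ltn_ceil n' (_ : 0 < 8 * q); rewrite muln_gt0 q_gt0 => /(_ isT).
have : 0 < n' %/ (8 * q) by rewrite divn_gt0 ?muln_gt0 ?q_gt0 //; lia.
by move: (n' %/ (8 * q)) => K; nia.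
Qed.

Theorem lemma10 :
  exists c d : nat, 0 < c /\ 0 < d /\
  forall n f : nat, 1 <= f -> d * (2 * f) <= trunc_log 2 n ->
  forall (s : nat)
         (enc : {set 'I_n * 'I_n} -> s.-tuple bool)
         (query : s.-tuple bool -> {set 'I_n * 'I_n} -> bool),
    (forall E F : {set 'I_n * 'I_n}, loopless E -> F \subset E -> #|F| <= 2 * f ->
        query (enc E) F <-> diam_finite (remove_edges E F)) ->
    2 ^ f * n <= c * s.
Proof.
exists 16, 2; do 2 split=> //.
move=> n [//|g] _ large s enc query correct.
case: n => [|n'] in enc query correct large *; first by rewrite trunc_log0 in large.
have big : 16 * 2 ^ g <= n'.+1.
  apply: leq_trans (trunc_logP (isT : 1 < 2) (ltn0Sn n')).
  by rewrite -(expnD 2 4) leq_exp2l //; lia.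
pose K := n' %/ (8 * 2 ^ g); have fit : K * (8 * 2 ^ g) <= n' := leq_divM n' _.
have decode (b : {ffun Idx K g -> bool}) i :
    query (enc (graph n' b)) (faults n' i) = b i.
  have [query_diam diam_query] := correct _ _ (loopless_graph b)
    (faults_sub_graph fit i b) (card_faults fit i).
  have [diam_bit bit_diam] := diam_finite_faults fit i b.
  by apply/idP/idP => [/query_diam/diam_bit | /bit_diam/diam_query].
have := @decodable_card_le _ s (fun b => enc (graph n' b))
  (fun i t => query t (faults n' i)) decode.
rewrite !card_prod !card_ord expnS => idx_le_s.
by apply: leq_trans (blocks_size_bound big) _; rewrite leq_mul2l idx_le_s orbT.
Qed.
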